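(* Let $n\ge1$ and let $\Phi:\mathbb{R}^{n+1}\to[0,+\infty)$ be a norm. Let $\psi(\widehat\xi):=\Phi(\widehat\xi,0)$ for $\widehat\xi\in\mathbb{R}^n$ (a norm on $\mathbb{R}^n$) with dual norm $\psi^o$. Then $\psi^o(\widehat\xi^* )\le\Phi^o(\widehat\xi^*,0)$ for all $\widehat\xi^*\in\mathbb{R}^n$, and equality $\psi^o(\widehat\xi^* )=\Phi^o(\widehat\xi^*,0)$ holds for all $\widehat\xi^*\in\mathbb{R}^n$ if and only if $\Phi(\widehat\xi,\xi_{n+1})\ge\Phi(\widehat\xi,0)$ for all $(\widehat\xi,\xi_{n+1})\in\mathbb{R}^{n+1}$.
   Context: A norm on $\mathbb{R}^m$ is a convex function $\Psi:\mathbb{R}^m\to[0,+\infty)$ with $\Psi(\lambda\xi)=|\lambda|\Psi(\xi)$ and $\Psi(\xi)\ge c|\xi|$ for some $c>0$; its dual norm is $\Psi^o(\xi^* )=\sup\{\xi^*\cdot\xi:\Psi(\xi)\le1\}$. *)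

From HB Require Import structures.
From mathcomp Require Import all_boot all_order all_algebra.
From mathcomp Require Import classical_sets reals.
Set Implicit Arguments. Unset Strict Implicit. Unset Printing Implicit Defensive.
Import Order.TTheory GRing.Theory Num.Theory.
Local Open Scope ring_scope.
Local Open Scope classical_set_scope.

Section Norms.
Variable R : realType.

Definition dotv (m : nat) (u v : 'rV[R]_m) : R := \sum_(i < m) u 0 i * v 0 i.

Definition euclid (m : nat) (v : 'rV[R]_m) : R := Num.sqrt (dotv v v).

Definition is_norm (m : nat) (Psi : 'rV[R]_m -> R) : Prop :=
  [/\ (forall x, 0 <= Psi x),
      (forall (t : R) x y, 0 <= t -> t <= 1 ->
          Psi (t *: x + (1 - t) *: y) <= t * Psi x + (1 - t) * Psi y),
      (forall (l : R) x, Psi (l *: x) = `|l| * Psi x) &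
      (exists2 c : R, 0 < c & forall x, c * euclid x <= Psi x)].

Definition dual_norm (m : nat) (Psi : 'rV[R]_m -> R) (xs : 'rV[R]_m) : R :=
  sup [set dotv xs x | x in [set x | Psi x <= 1]].

End Norms.

(* The unit ball of psi sits inside that of Phi, which gives the inequality of
   dual norms. If Phi is monotone in the last coordinate, every point of the
   unit ball of Phi projects into the unit ball of psi, which gives equality.
   Conversely, if the dual norms agree, take a supporting functional g of psi
   at xh (finite-dimensional Hahn-Banach, obtained by extending a linear
   minorant one coordinate at a time); then psi^o(g) <= 1, so Phi^o(g, 0) <= 1
   and psi(xh) = g . xh = (g, 0) . (xh, a) <= Phi(xh, a). *)

From mathcomp Require Import all_boot all_order all_algebra.
From mathcomp Require Import classical_sets reals.
From mathcomp Require Import ring lra.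
Set Implicit Arguments.
Unset Strict Implicit.
Unset Printing Implicit Defensive.

Import Order.TTheory GRing.Theory Num.Theory.
Local Open Scope ring_scope.
Local Open Scope classical_set_scope.

Section InnerProduct.
Variables (R : realType) (m : nat).
Implicit Types u v w : 'rV[R]_m.

Lemma dotvDr u v w : dotv u (v + w) = dotv u v + dotv u w.
Proof. by rewrite /dotv -big_split; apply: eq_bigr => i _; rewrite mxE mulrDr. Qed.

Lemma dotvDl u v w : dotv (v + w) u = dotv v u + dotv w u.
Proof. by rewrite /dotv -big_split; apply: eq_bigr => i _; rewrite mxE mulrDl. Qed.

Lemma dotvZr a u v : dotv u (a *: v) = a * dotv u v.
Proof. by rewrite /dotv mulr_sumr; apply: eq_bigr => i _; rewrite mxE mulrCA. Qed.

Lemma dotvZl a u v : dotv (a *: v) u = a * dotv v u.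
Proof. by rewrite /dotv mulr_sumr; apply: eq_bigr => i _; rewrite mxE mulrA. Qed.

Lemma dotv0r u : dotv u 0 = 0.
Proof. by rewrite -(scale0r 0) dotvZr mul0r. Qed.

Lemma dotv0l u : dotv 0 u = 0.
Proof. by rewrite -(scale0r 0) dotvZl mul0r. Qed.

Lemma dotvNr u v : dotv u (- v) = - dotv u v.
Proof. by rewrite -scaleN1r dotvZr mulN1r. Qed.

Lemma dotv_delta_mxl (k : 'I_m) v : dotv (delta_mx 0 k) v = v 0 k.
Proof.
rewrite /dotv (bigD1 k) //= big1 ?addr0; first by rewrite mxE !eqxx mul1r.
by move=> i ik; rewrite mxE (negbTE ik) andbF mul0r.
Qed.

Lemma dotv_delta_mxr (k : 'I_m) v : dotv v (delta_mx 0 k) = v 0 k.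
Proof.
rewrite /dotv (bigD1 k) //= big1 ?addr0; first by rewrite mxE !eqxx mulr1.
by move=> i ik; rewrite mxE (negbTE ik) andbF mulr0.
Qed.

Lemma dotv_le_euclid w v : dotv w v <= (\sum_i `|w 0 i|) * euclid v.
Proof.
rewrite mulr_suml /dotv; apply: ler_sum => i _.
rewrite (le_trans (ler_norm _)) // normrM ler_wpM2l //.
rewrite /euclid -sqrtr_sqr ler_wsqrtr // /dotv (bigD1 i) //= expr2 lerDl.
by apply: sumr_ge0 => j _; rewrite -expr2 sqr_ge0.
Qed.

End InnerProduct.

Lemma dotv_row_mx (R : realType) m k (u v : 'rV[R]_m) (u' v' : 'rV[R]_k) :
  dotv (row_mx u u') (row_mx v v') = dotv u v + dotv u' v'.
Proof.
by rewrite /dotv big_split_ord /=; congr (_ + _); apply: eq_bigr => i _;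
  rewrite ?row_mxEl ?row_mxEr.
Qed.

Lemma euclid_row_mx0 (R : realType) m k (v : 'rV[R]_m) :
  euclid (row_mx v (0 : 'rV[R]_k)) = euclid v.
Proof. by rewrite /euclid dotv_row_mx dotv0r addr0. Qed.

Section Sublinear.
Variables (R : realType) (m : nat).
Implicit Types (p : 'rV[R]_m -> R) (g y z e : 'rV[R]_m).

Definition sublinear p :=
  (forall y z, p (y + z) <= p y + p z) /\
  (forall (t : R) y, 0 < t -> t * p y <= p (t *: y)).

Lemma sublinear0 p : sublinear p -> p 0 = 0.
Proof.
case=> psub phom; have := psub 0 0; have := phom 2 0 (ltr0Sn R 1).
by rewrite scaler0 addr0; lra.
Qed.

Lemma sublinear_scale p (t : R) y : sublinear p -> 0 <= t -> t * p y <= p (t *: y).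
Proof.
move=> hp; rewrite le_eqVlt => /predU1P[<-|]; last exact: hp.2.
by rewrite mul0r scale0r sublinear0.
Qed.

Lemma sublinear_extension_step p (S : set 'rV[R]_m) g e :
  sublinear p -> S 0 ->
  (forall y z, S y -> S z -> S (y + z)) -> (forall (a : R) y, S y -> S (a *: y)) ->
  (forall y, S y -> dotv g y <= p y) ->
  exists c, forall y (t : R), S y -> dotv g y + t * c <= p (y + t *: e).
Proof.
move=> [psub phom] S0 SD SZ hg.
have gap y z : S y -> S z -> dotv g y - p (y - e) <= p (z + e) - dotv g z.
  move=> Sy Sz; have := hg _ (SD _ _ Sy Sz); have := psub (y - e) (z + e).
  by rewrite addrACA addNr addr0 dotvDr; lra.
pose A := [set dotv g y - p (y - e) | y in S].
have A0 : A !=set0 by exists (dotv g 0 - p (0 - e)); exists 0.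
have Aub : has_ubound A by exists (p (0 + e) - dotv g 0) => _ [y Sy <-]; exact: gap.
(* sup A lies between the two sides of [gap]: the left side bounds t < 0,
   the right side bounds t > 0, after rescaling by |t|. *)
exists (sup A) => y t Sy.
have [t_lt0|t_gt0|->] := ltrgtP t 0; last by rewrite mul0r scale0r !addr0; exact: hg.
- have s_gt0 : 0 < - t by rewrite oppr_gt0.
  have := ub_le_sup Aub (ex_intro2 _ _ _ (SZ (- t)^-1 _ Sy) erefl).
  rewrite dotvZr -(ler_pM2l s_gt0) mulrBr mulrA divff ?gt_eqF // mul1r.
  have := phom _ ((- t)^-1 *: y - e) s_gt0.
  by rewrite scalerDr scalerA divff ?gt_eqF // scale1r scalerN scaleNr opprK; lra.
- have : sup A <= p (t^-1 *: y + e) - dotv g (t^-1 *: y).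
    by apply: ge_sup => // _ [z Sz <-]; exact: gap _ _ Sz (SZ _ _ Sy).
  rewrite dotvZr -(ler_pM2l t_gt0) mulrBr mulrA divff ?gt_eqF // mul1r.
  have := phom _ (t^-1 *: y + e) t_gt0.
  by rewrite scalerDr scalerA divff ?gt_eqF // scale1r; lra.
Qed.

Definition vanishes_from (k : nat) y := forall j : 'I_m, (k <= j)%N -> y 0 j = 0.

Lemma vanishes_fromS_split (k : 'I_m) y :
  vanishes_from k.+1 y -> vanishes_from k (y - y 0 k *: delta_mx 0 k).
Proof.
move=> hy j kj; rewrite !mxE.
have [->|jk] := eqVneq j k; first by rewrite !eqxx mulr1 subrr.
rewrite andbF mulr0 subr0 hy // ltn_neqAle kj andbT.
by apply: contra jk => /eqP kj'; apply/eqP/val_inj.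
Qed.

Lemma sublinear_minorant p : sublinear p -> exists g, forall y, dotv g y <= p y.
Proof.
move=> hp.
suff /(_ m (leqnn m)) [g hg] : forall k, (k <= m)%N ->
    exists g, forall y, vanishes_from k y -> dotv g y <= p y.
  by exists g => y; apply: hg => j; rewrite leqNgt ltn_ord.
elim=> [_ | k IH km].
  exists 0 => y hy; have -> : y = 0 by apply/matrixP => i j; rewrite ord1 mxE hy.
  by rewrite dotv0r sublinear0.
have [g hg] := IH (ltnW km); pose kk := Ordinal km; pose e : 'rV[R]_m := delta_mx 0 kk.
have [|||c hc] := @sublinear_extension_step p (vanishes_from k) g e hp _ _ _ hg.
- by move=> j _; rewrite mxE.
- by move=> y z hy hz j kj; rewrite mxE hy ?hz ?addr0.
- by move=> a y hy j kj; rewrite mxE hy ?mulr0.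
exists (g + (c - g 0 kk) *: e) => w hw.
have hy := @vanishes_fromS_split kk w hw; rewrite -/e in hy.
have wE : w = (w - w 0 kk *: e) + w 0 kk *: e by rewrite subrK.
move: hy wE; move: (w 0 kk) (w - w 0 kk *: e) => t y hy ->.
have := hc y t hy.
rewrite dotvDl dotvZl dotv_delta_mxl dotvDr dotvZr dotv_delta_mxr !mxE !eqxx.
by rewrite (hy kk (leqnn k)) add0r mulr1; lra.
Qed.

End Sublinear.

Section Support.
Variables (R : realType) (m : nat) (p : 'rV[R]_m -> R) (x0 : 'rV[R]_m).
Hypothesis hp : sublinear p.

(* ray_inf is a sublinear minorant of p with ray_inf (- x0) <= - p x0, so any
   linear minorant of it supports p at x0. *)
Definition ray_set (y : 'rV[R]_m) :=
  [set p (y + t *: x0) - t * p x0 | t in [set t : R | 0 <= t]].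

Definition ray_inf (y : 'rV[R]_m) := inf (ray_set y).

Let ray_set_neq0 y : ray_set y !=set0.
Proof. by exists (p (y + 0 *: x0) - 0 * p x0), 0 => /=. Qed.

Let ray_set_lbound y : has_lbound (ray_set y).
Proof.
exists (- p (- y)) => _ [t /= t_ge0 <-].
have := hp.1 (y + t *: x0) (- y); have := sublinear_scale x0 hp t_ge0.
by rewrite addrAC subrr add0r; lra.
Qed.

Lemma ray_inf_le y (t : R) : 0 <= t -> ray_inf y <= p (y + t *: x0) - t * p x0.
Proof. by move=> t_ge0; apply: ge_inf => //; exists t. Qed.

Lemma ray_inf_le_self y : ray_inf y <= p y.
Proof. by have := ray_inf_le y (lexx 0); rewrite scale0r addr0 mul0r subr0. Qed.

Lemma ray_inf_opp : ray_inf (- x0) <= - p x0.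
Proof.
by have := ray_inf_le (- x0) ler01; rewrite scale1r addNr sublinear0 // mul1r sub0r.
Qed.

Lemma ray_inf_sublinear : sublinear ray_inf.
Proof.
split=> [y z | s y s_gt0].
  suff : ray_inf (y + z) - ray_inf y <= ray_inf z by lra.
  apply: lb_le_inf => // _ [t' /= t'_ge0 <-].
  suff : ray_inf (y + z) - (p (z + t' *: x0) - t' * p x0) <= ray_inf y by lra.
  apply: lb_le_inf => // _ [t /= t_ge0 <-].
  have := ray_inf_le (y + z) (addr_ge0 t_ge0 t'_ge0).
  have := hp.1 (y + t *: x0) (z + t' *: x0).
  by rewrite addrACA -scalerDl; lra.
apply: lb_le_inf => // _ [t /= t_ge0 <-].
have u_ge0 : 0 <= s^-1 * t by rewrite mulr_ge0 // invr_ge0 ltW.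
have := ray_inf_le y u_ge0; rewrite -(ler_pM2l s_gt0) => h.
have := hp.2 s (y + (s^-1 * t) *: x0) s_gt0.
rewrite scalerDr scalerA mulrA divff ?gt_eqF // mul1r.
by move: h; rewrite mulrBr !mulrA divff ?gt_eqF // mul1r; lra.
Qed.

Lemma sublinear_support :
  exists g, p x0 <= dotv g x0 /\ forall y, dotv g y <= p y.
Proof.
have [g hg] := sublinear_minorant ray_inf_sublinear.
exists g; split; last by move=> y; exact: le_trans (hg y) (ray_inf_le_self y).
by have := le_trans (hg (- x0)) ray_inf_opp; rewrite dotvNr; lra.
Qed.

End Support.

Section DualNorm.
Variables (R : realType) (m : nat) (P : 'rV[R]_m -> R).
Hypothesis hP : is_norm P.

Lemma is_norm_sublinear : sublinear P.
Proof.
have [_ Pconv Phom _] := hP; split=> [y z | t y t_gt0]; last first.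
  by rewrite Phom gtr0_norm.
have half_ge0 : (0 : R) <= 2^-1 by rewrite invr_ge0.
have half_le1 : (2^-1 : R) <= 1 by rewrite invf_le1 // ler1n.
have := Pconv _ (2 *: y) (2 *: z) half_ge0 half_le1.
have -> : (1 - 2^-1 : R) = 2^-1 by field.
by rewrite -!scalerDr !scalerA mulVf ?pnatr_eq0 // !scale1r !Phom ger0_norm; lra.
Qed.

Lemma is_norm0 : P 0 = 0.
Proof. exact: sublinear0 is_norm_sublinear. Qed.

Let dual_set w := [set dotv w x | x in [set x | P x <= 1]].

Let dual_set_neq0 w : dual_set w !=set0.
Proof. by exists (dotv w 0), 0; rewrite //= is_norm0. Qed.

Let dual_set_ubound w : has_ubound (dual_set w).
Proof.
have [_ _ _ [c c_gt0 hc]] := hP.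
exists ((\sum_i `|w 0 i|) / c) => _ [x /= Px_le1 <-].
apply: le_trans (dotv_le_euclid w x) _; rewrite ler_wpM2l ?sumr_ge0 //.
by rewrite -(ler_pM2l c_gt0) mulfV ?gt_eqF // (le_trans (hc x)).
Qed.

Lemma le_dual_norm w x : P x <= 1 -> dotv w x <= dual_norm P w.
Proof. by move=> Px_le1; apply: (ub_le_sup (dual_set_ubound w)); exists x. Qed.

Lemma dual_norm_le w (b : R) :
  (forall x, P x <= 1 -> dotv w x <= b) -> dual_norm P w <= b.
Proof. by move=> hb; apply: ge_sup (dual_set_neq0 w) _ => _ [x /= /hb le_b <-]. Qed.

Lemma dotv_le_dual_norm w x : dotv w x <= dual_norm P w * P x.
Proof.
have [P_ge0 _ Phom [c c_gt0 hc]] := hP.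
have [Px_gt0 | Px_le0] := ltrP 0 (P x).
  have : P ((P x)^-1 *: x) <= 1.
    by rewrite Phom ger0_norm ?mulVf ?gt_eqF // invr_ge0 ltW.
  by move/(le_dual_norm w); rewrite dotvZr ler_pdivrMl // mulrC.
have euclid0 : euclid x = 0.
  apply/eqP; rewrite eq_le sqrtr_ge0 andbT.
  by rewrite -(pmulr_rle0 _ c_gt0) (le_trans (hc x)).
have Px0 : P x = 0 by apply/le_anti; rewrite Px_le0 P_ge0.
by rewrite Px0 mulr0 (le_trans (dotv_le_euclid w x)) // euclid0 mulr0.
Qed.

End DualNorm.

Section Restriction.
Variables (R : realType) (m k : nat) (Phi : 'rV[R]_(m + k) -> R).
Hypothesis hPhi : is_norm Phi.

Definition restrict_norm (x : 'rV[R]_m) := Phi (row_mx x 0).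

Lemma is_norm_restrict : is_norm restrict_norm.
Proof.
have [Phi_ge0 Phi_conv Phi_hom [c c_gt0 hc]] := hPhi; rewrite /restrict_norm.
split=> [x | t x y t_ge0 t_le1 | a x |].
- exact: Phi_ge0.
- rewrite (_ : row_mx _ 0 = t *: row_mx x 0 + (1 - t) *: row_mx y 0) ?Phi_conv //.
  by rewrite !scale_row_mx add_row_mx !scaler0 addr0.
- by rewrite -Phi_hom scale_row_mx scaler0.
- by exists c => // x; rewrite -(euclid_row_mx0 k x).
Qed.

Lemma dual_norm_restrict_le xs :
  dual_norm restrict_norm xs <= dual_norm Phi (row_mx xs 0).
Proof.
apply: (dual_norm_le is_norm_restrict) => x Px_le1.
have := le_dual_norm hPhi (row_mx xs 0) Px_le1.
by rewrite dotv_row_mx dotv0l addr0.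
Qed.

Lemma dual_norm_restrict_eq :
  (forall x (b : 'rV[R]_k), Phi (row_mx x 0) <= Phi (row_mx x b)) ->
  forall xs, dual_norm restrict_norm xs = dual_norm Phi (row_mx xs 0).
Proof.
move=> Phi_mono xs; apply/le_anti; rewrite dual_norm_restrict_le /=.
apply: (dual_norm_le hPhi) => w Pw_le1.
rewrite -(hsubmxK w) dotv_row_mx dotv0l addr0 (le_dual_norm is_norm_restrict) //.
by rewrite /restrict_norm (le_trans (Phi_mono _ (rsubmx w))) // hsubmxK.
Qed.

Lemma restrict_norm_le_of_dual_norm_eq :
  (forall xs, dual_norm restrict_norm xs = dual_norm Phi (row_mx xs 0)) ->
  forall x (b : 'rV[R]_k), Phi (row_mx x 0) <= Phi (row_mx x b).
Proof.
move=> dual_eq x b.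
have [g [gx g_le]] := sublinear_support x (is_norm_sublinear is_norm_restrict).
have dual_g_le1 : dual_norm restrict_norm g <= 1.
  by apply: (dual_norm_le is_norm_restrict) => y; apply: le_trans (g_le y).
apply: le_trans gx _; rewrite -[dotv g x]addr0 -(dotv0l b) -dotv_row_mx.
apply: le_trans (dotv_le_dual_norm hPhi _ _) _.
by rewrite -dual_eq ler_piMl //; case: hPhi.
Qed.

End Restriction.

Theorem lemmaA4 (R : realType) (n : nat) (hn : (1 <= n)%N)
  (Phi : 'rV[R]_(n + 1) -> R) (hPhi : is_norm Phi) :
  let psi := fun xh : 'rV[R]_n => Phi (row_mx xh 0) in
  [/\ is_norm psi,
      (forall xs : 'rV[R]_n, dual_norm psi xs <= dual_norm Phi (row_mx xs 0)) &
      ((forall xs : 'rV[R]_n, dual_norm psi xs = dual_norm Phi (row_mx xs 0)) <->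
       (forall (xh : 'rV[R]_n) (a : R), Phi (row_mx xh 0) <= Phi (row_mx xh a%:M)))].
Proof.
move=> psi; split; [exact: is_norm_restrict | exact: dual_norm_restrict_le | split].
- by move=> /(restrict_norm_le_of_dual_norm_eq hPhi) Phi_mono xh a; apply: Phi_mono.
- move=> Phi_mono; apply: dual_norm_restrict_eq hPhi _ => xh b.
  by rewrite [b]mx11_scalar.
Qed.
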